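(* Let $L,N,K$ be finite simplicial complexes, let $\varphi: L\to N$ and $\psi: N\to K$ be surjective simplicial finite-fibrations, and let $n\ge2$. Then $\mathrm{TC}_n(\psi\circ\varphi)\le\min\{\mathrm{TC}_n(\varphi),\mathrm{TC}_n(\psi)\}$.
   Context: Simplicial complexes are abstract and edge-path connected; $X^n$ is the $n$-fold categorical product (vertex set $\mathrm{VX}(X)^n$; a set of vertices is a simplex iff each coordinate projection is a simplex). Simplicial maps $f,g: X\to Y$ are contiguous if $f(\sigma)\cup g(\sigma)$ is a simplex for every simplex $\sigma$; $f\sim g$ if joined by a finite chain of contiguous simplicial maps. $\mathrm{SD}(\varphi_1,\dots,\varphi_m)$ for simplicial maps $X\to Y$ is the least $k\ge0$ such that $X$ is a union of subcomplexes $X_0,\dots,X_k$ with $\varphi_i|_{X_j}\sim\varphi_l|_{X_j}$ for all $i,l,j$. For a surjective simplicial finite-fibration $\phi: X\to Y$, $\mathrm{TC}_n(\phi)=\mathrm{SD}(\phi\circ p_1,\dots,\phi\circ p_n)$ where $p_i: X^n\to X$ are the projections. $I_m$ is the complex with vertices $0,\dots,m$ and edges $\{i,i+1\}$; $\phi: X\to Y$ is a simplicial finite-fibration if for every finite complex $M$, $m\ge1$, inclusion $i: M\times\{0\}\to M\times I_m$ and simplicial $g: M\times\{0\}\to X$, $G: M\times I_m\to Y$ with $\phi\circ g=G\circ i$, there is simplicial $\widetilde G: M\times I_m\to X$ with $\widetilde G\circ i=g$, $\phi\circ\widetilde G=G$. *)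

From Stdlib Require Import ClassicalEpsilon Relation_Operators.
From mathcomp Require Import all_boot.
Set Implicit Arguments. Unset Strict Implicit. Unset Printing Implicit Defensive.

Definition is_complex (V : finType) (S : pred {set V}) : Prop :=
  [/\ forall s, S s -> s != set0,
      forall v : V, S [set v] &
      forall s t : {set V}, S s -> t \subset s -> t != set0 -> S t].

Definition edge_connected (V : finType) (S : pred {set V}) : Prop :=
  forall u v : V, connect (fun a b => S [set a; b]) u v.

Record fcomplex := FComplex {
  vtx : finType;
  simp : pred {set vtx};
  simp_complex : is_complex simp;
  simp_connected : edge_connected simp }.
Arguments simp : clear implicits.

Definition smap (V W : finType) (A : pred {set V}) (SY : pred {set W})
  (f : V -> W) : Prop := forall s, A s -> SY (f @: s).

Definition prod_simp (A B : finType) (SA : pred {set A}) (SB : pred {set B})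
  : pred {set A * B} :=
  fun s => [&& s != set0, SA (fst @: s) & SB (snd @: s)].

(* n-fold categorical product X^n, vertices = n-tuples (finite functions) *)
Definition pow_simp (n : nat) (V : finType) (S : pred {set V})
  : pred {set {ffun 'I_n -> V}} :=
  fun s => (s != set0) && [forall i : 'I_n, S ((fun f : {ffun 'I_n -> V} => f i) @: s)].

(* the complex I_m on vertices 0..m with edges {i,i+1} *)
Definition Im_simp (m : nat) : pred {set 'I_m.+1} :=
  fun s => [exists i : 'I_m.+1, s == [set i]] ||
           [exists i : 'I_m.+1, exists j : 'I_m.+1,
              (nat_of_ord j == (nat_of_ord i).+1) && (s == [set i; j])].

Definition subcomplex (V : finType) (S A : pred {set V}) : Prop :=
  (forall s, A s -> S s) /\
  (forall s t : {set V}, A s -> t \subset s -> t != set0 -> A t).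

Definition contiguous (V W : finType) (A : pred {set V}) (SY : pred {set W})
  (f g : V -> W) : Prop := forall s, A s -> SY ((f @: s) :|: (g @: s)).

Definition csim (V W : finType) (A : pred {set V}) (SY : pred {set W})
  (f g : V -> W) : Prop :=
  clos_refl_trans (V -> W) (fun f1 f2 => [/\ smap A SY f1, smap A SY f2 & contiguous A SY f1 f2]) f g.

Definition SD_le (V W : finType) (I : Type) (S : pred {set V}) (SY : pred {set W})
  (phis : I -> V -> W) (k : nat) : Prop :=
  exists Xs : 'I_k.+1 -> pred {set V},
    [/\ forall j, subcomplex S (Xs j),
        forall s, S s -> exists j, Xs j s &
        forall i l j, csim (Xs j) SY (phis i) (phis l)].

Definition SD (V W : finType) (I : Type) (S : pred {set V}) (SY : pred {set W})
  (phis : I -> V -> W) : nat :=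
  epsilon (inhabits 0%N)
    (fun k => SD_le S SY phis k /\ forall j, SD_le S SY phis j -> (k <= j)%N).

Definition TCn (n : nat) (X Y : fcomplex) (phi : vtx X -> vtx Y) : nat :=
  SD (@pow_simp n _ (simp X)) (simp Y) (fun (i : 'I_n) (x : {ffun 'I_n -> vtx X}) => phi (x i)).

Definition finite_fibration (X Y : fcomplex) (phi : vtx X -> vtx Y) : Prop :=
  forall (M : fcomplex) (m : nat), (0 < m)%N ->
  forall (g : vtx M -> vtx X) (G : vtx M * 'I_m.+1 -> vtx Y),
    smap (simp M) (simp X) g ->
    smap (prod_simp (simp M) (@Im_simp m)) (simp Y) G ->
    (forall v, phi (g v) = G (v, ord0)) ->
    exists Gt : vtx M * 'I_m.+1 -> vtx X,
      [/\ smap (prod_simp (simp M) (@Im_simp m)) (simp X) Gt,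
          forall v, Gt (v, ord0) = g v &
          forall p, phi (Gt p) = G p].

Definition surj_sfibration (X Y : fcomplex) (phi : vtx X -> vtx Y) : Prop :=
  [/\ smap (simp X) (simp Y) phi, forall y, exists x, phi x = y & finite_fibration phi].

From Stdlib Require Import ClassicalEpsilon Relation_Operators Classical FunctionalExtensionality.
From Stdlib Require Wf_nat.
From mathcomp Require Import all_boot.
Set Implicit Arguments. Unset Strict Implicit. Unset Printing Implicit Defensive.

(* Post-composing the maps with the simplicial map psi preserves contiguity
   chains, so a cover of L^n witnessing TC_n(phi) also witnesses a bound for
   psi o phi; pulling back along phi^n a cover of N^n witnessing TC_n(psi)
   does the same.  Because SD is defined as
   a minimum, one also needs some finite cover to exist: the face complexes
   of the simplices work, since on the faces of one simplex a simplicial map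
   is contiguous to a constant, and constants at vertices joined by an edge
   path are chained by contiguities. *)

Definition face_closed (V : finType) (S : pred {set V}) : Prop :=
  forall s t : {set V}, S s -> t \subset s -> t != set0 -> S t.

Lemma complex_face_closed (V : finType) (S : pred {set V}) :
  is_complex S -> face_closed S.
Proof. by case. Qed.

(* Requiring [S s0] makes the faces of a non-simplex, such as the default
   [set0] of [nth], an empty subcomplex. *)
Definition faces (V : finType) (S : pred {set V}) (s0 : {set V}) : pred {set V} :=
  fun t => [&& S t, S s0 & t \subset s0].

Lemma SD_minP (V W : finType) (I : Type) (S : pred {set V}) (SY : pred {set W})
    (phis : I -> V -> W) (k : nat) :
  SD_le S SY phis k ->
  SD_le S SY phis (SD S SY phis) /\
  forall j, SD_le S SY phis j -> (SD S SY phis <= j)%N.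
Proof.
move=> SDk; have [m [[SDm m_min] _]] :=
  Wf_nat.dec_inh_nat_subset_has_unique_least_element
    _ (fun j => classic (SD_le S SY phis j)) (ex_intro _ k SDk).
have least_exists : exists m, SD_le S SY phis m /\
    forall j, SD_le S SY phis j -> (m <= j)%N.
  by exists m; split=> // j SDj; apply/leP/m_min.
exact: (epsilon_spec (inhabits 0%N) _ least_exists).
Qed.

Lemma imset_cst (V W : finType) (t : {set V}) (a : W) :
  t != set0 -> (fun=> a) @: t = [set a].
Proof.
case/set0Pn=> x xt; apply/setP=> y; rewrite inE.
by apply/imsetP/eqP=> [[z _ ->] | ->] //; exists x.
Qed.

Lemma smap_comp (U V W : finType) (A : pred {set U}) (SV : pred {set V})
    (SW : pred {set W}) (f : U -> V) (g : V -> W) :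
  smap A SV f -> smap SV SW g -> smap A SW (g \o f).
Proof. by move=> sf sg s As; rewrite imset_comp; apply/sg/sf. Qed.

Section Contiguity.
Variables (V W : finType) (SY : pred {set W}).

Lemma csim_sym (A : pred {set V}) (f g : V -> W) :
  csim A SY f g -> csim A SY g f.
Proof.
elim=> [f1 f2 [sf1 sf2 c12] | f1 | f1 f2 f3 _ IH12 _ IH23].
- by apply: rt_step; split=> // s As; rewrite setUC; apply: c12.
- exact: rt_refl.
- exact: rt_trans IH23 IH12.
Qed.

Lemma csim_comp (Z : finType) (SZ : pred {set Z}) (A : pred {set V})
    (f g : V -> W) (psi : W -> Z) :
  smap SY SZ psi -> csim A SY f g -> csim A SZ (psi \o f) (psi \o g).
Proof.
move=> spsi; elim=> [f1 f2 [sf1 sf2 c12] | f1 | f1 f2 f3 _ IH12 _ IH23].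
- apply: rt_step; split.
  + exact: smap_comp sf1 spsi.
  + exact: smap_comp sf2 spsi.
  + by move=> s As; rewrite 2!imset_comp -imsetU; apply/spsi/c12.
- exact: rt_refl.
- exact: rt_trans IH12 IH23.
Qed.

Lemma csim_precomp (U : finType) (A : pred {set U}) (A' : pred {set V})
    (f g : V -> W) (h : U -> V) :
  smap A A' h -> csim A' SY f g -> csim A SY (f \o h) (g \o h).
Proof.
move=> sh; elim=> [f1 f2 [sf1 sf2 c12] | f1 | f1 f2 f3 _ IH12 _ IH23].
- apply: rt_step; split; [exact: smap_comp sh sf1 | exact: smap_comp sh sf2 |].
  by move=> s As; rewrite 2!imset_comp; apply/c12/sh.
- exact: rt_refl.
- exact: rt_trans IH12 IH23.
Qed.

Hypothesis SY_complex : is_complex SY.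

Lemma csim_cst (A : pred {set V}) (a b : W) :
  (forall t, A t -> t != set0) -> connect (fun a b => SY [set a; b]) a b ->
  csim A SY (fun=> a) (fun=> b).
Proof.
have [_ SY1 _] := SY_complex.
move=> A_neq0 /connectP[p]; elim: p a => [|c p IH] a /=.
  by move=> _ ->; apply: rt_refl.
case/andP=> ac pc b_last; apply: rt_trans (IH c pc b_last); apply: rt_step.
by split=> t /A_neq0 t0; rewrite !imset_cst.
Qed.

Variables (S : pred {set V}) (s0 : {set V}).
Hypothesis S_neq0 : forall t, S t -> t != set0.

Lemma faces_neq0 t : faces S s0 t -> t != set0.
Proof. by case/and3P=> /S_neq0. Qed.

(* On the faces of s0, the image of f lies in the simplex f @: s0, which
   contains f x0. *)
Lemma csim_faces_cst (f : V -> W) (x0 : V) :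
  x0 \in s0 -> smap S SY f -> csim (faces S s0) SY f (fun=> f x0).
Proof.
have [_ SY1 SY_closed] := SY_complex.
move=> x0s0 sf; apply: rt_step; split.
- by move=> t /and3P[St _ _]; apply: sf.
- by move=> t /faces_neq0 t0; rewrite imset_cst.
- move=> t /[dup] /faces_neq0 t0 /and3P[_ Ss0 ts0]; rewrite imset_cst //.
  apply: SY_closed (sf _ Ss0) _ _; last by rewrite setU_eq0 negb_and imset_eq0 t0.
  by rewrite subUset imsetS //= sub1set imset_f.
Qed.

Lemma csim_faces (f g : V -> W) :
  edge_connected SY -> smap S SY f -> smap S SY g -> csim (faces S s0) SY f g.
Proof.
move=> SY_connected sf sg.
have [-> | [x0 x0s0]] := set_0Vmem s0.
  have no_faces t : faces S set0 t -> False.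
    by case/and3P=> /S_neq0 + _; rewrite subset0 => /negPf ->.
  by apply: rt_step; split=> t /no_faces.
apply: rt_trans (csim_faces_cst x0s0 sf) _.
apply: rt_trans (csim_cst faces_neq0 (SY_connected (f x0) (g x0))) _.
exact/csim_sym/csim_faces_cst.
Qed.

End Contiguity.

Lemma SD_le_exists (V W : finType) (I : Type) (S : pred {set V})
    (SY : pred {set W}) (phis : I -> V -> W) :
  is_complex SY -> edge_connected SY -> face_closed S ->
  (forall t, S t -> t != set0) -> (forall i, smap S SY (phis i)) ->
  exists k, SD_le S SY phis k.
Proof.
move=> SY_complex SY_connected S_closed S_neq0 sphis.
pose e := enum [set: {set V}].
exists (size e), (fun j => faces S (nth set0 e j)); split.
- move=> j; split=> [s /and3P[] // | s t /and3P[Ss Ss0 ss0] ts t0].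
  by rewrite /faces (S_closed s t) // Ss0 (subset_trans ts ss0).
- move=> s Ss; have s_e : (index s e < (size e).+1)%N.
    by rewrite ltnS ltnW // index_mem mem_enum in_setT.
  by exists (Ordinal s_e); rewrite /faces /= nth_index ?mem_enum ?in_setT ?Ss ?subxx.
- by move=> i l j; apply: csim_faces.
Qed.

Lemma SD_le_comp (V W Z : finType) (I : Type) (S : pred {set V})
    (SY : pred {set W}) (SZ : pred {set Z}) (phis : I -> V -> W) (psi : W -> Z)
    (k : nat) :
  smap SY SZ psi -> SD_le S SY phis k -> SD_le S SZ (fun i => psi \o phis i) k.
Proof.
move=> spsi [Xs [Xs_sub Xs_cover Xs_csim]].
by exists Xs; split=> // i l j; apply/csim_comp/Xs_csim.
Qed.

Lemma SD_le_precomp (U V W : finType) (I : Type) (S : pred {set U})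
    (S' : pred {set V}) (SY : pred {set W}) (phis : I -> V -> W)
    (phis' : I -> U -> W) (h : U -> V) (k : nat) :
  face_closed S -> smap S S' h -> (forall i x, phis' i x = phis i (h x)) ->
  SD_le S' SY phis k -> SD_le S SY phis' k.
Proof.
move=> S_closed sh phis'E [Xs [Xs_sub Xs_cover Xs_csim]].
exists (fun j t => S t && Xs j (h @: t)); split.
- move=> j; split=> [s /andP[] // | s t /andP[Ss Xs_s] ts t0].
  rewrite (S_closed s t) //; have [_ Xs_closed] := Xs_sub j.
  by apply: Xs_closed Xs_s _ _; rewrite ?imsetS ?imset_eq0.
- by move=> s Ss; have [j Xs_hs] := Xs_cover _ (sh _ Ss); exists j; apply/andP.
- have phis'_comp i : phis' i = phis i \o h.
    by apply: functional_extensionality => x; apply: phis'E.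
  move=> i l j; rewrite !phis'_comp.
  by apply: (csim_precomp _ (Xs_csim i l j)) => t /andP[].
Qed.

Section Power.
Variables (n : nat) (V : finType) (S : pred {set V}).

Lemma pow_simp_neq0 t : @pow_simp n _ S t -> t != set0.
Proof. by case/andP. Qed.

Lemma pow_simp_face_closed : face_closed S -> face_closed (@pow_simp n _ S).
Proof.
move=> S_closed s t /andP[_ /forallP Ss] ts t0; rewrite /pow_simp t0.
by apply/forallP=> i; apply: S_closed (Ss i) _ _; rewrite ?imsetS ?imset_eq0.
Qed.

Lemma smap_proj (i : 'I_n) :
  smap (@pow_simp n _ S) S (fun x : {ffun 'I_n -> V} => x i).
Proof. by move=> s /andP[_ /forallP]. Qed.

Lemma smap_pow (W : finType) (SY : pred {set W}) (f : V -> W) :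
  smap S SY f ->
  smap (@pow_simp n _ S) (@pow_simp n _ SY)
    (fun x : {ffun 'I_n -> V} => [ffun i => f (x i)]).
Proof.
move=> sf s /[dup] s_simp /andP[s0 _]; rewrite /pow_simp imset_eq0 s0.
apply/forallP=> i; rewrite -imset_comp.
rewrite (eq_imset _ (g := f \o fun x : {ffun 'I_n -> V} => x i)) => [|x]; last first.
  by rewrite /= ffunE.
exact: smap_comp (smap_proj i) sf _ s_simp.
Qed.

End Power.

Section TopologicalComplexity.
Variables (n : nat) (X Y : fcomplex) (f : vtx X -> vtx Y).
Hypothesis f_smap : smap (simp X) (simp Y) f.

Let TCn_exists :
  exists k, SD_le (@pow_simp n _ (simp X)) (simp Y) (fun i x => f (x i)) k.
Proof.
apply: SD_le_exists (@pow_simp_neq0 n _ _) _.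
- exact: simp_complex.
- exact: simp_connected.
- exact/pow_simp_face_closed/complex_face_closed/simp_complex.
- by move=> i; apply: smap_comp (smap_proj i) f_smap.
Qed.

Lemma SD_le_TCn :
  SD_le (@pow_simp n _ (simp X)) (simp Y) (fun i x => f (x i)) (TCn n f).
Proof. by have [k /SD_minP[]] := TCn_exists. Qed.

Lemma TCn_min k :
  SD_le (@pow_simp n _ (simp X)) (simp Y) (fun i x => f (x i)) k -> (TCn n f <= k)%N.
Proof. by have [k0 /SD_minP[_]] := TCn_exists; apply. Qed.

End TopologicalComplexity.

Theorem theorem5p4 (L N K : fcomplex) (phi : vtx L -> vtx N) (psi : vtx N -> vtx K)
  (n : nat) :
  surj_sfibration phi -> surj_sfibration psi -> (2 <= n)%N ->
  (TCn n (psi \o phi) <= minn (TCn n phi) (TCn n psi))%N.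
Proof.
move=> [phi_smap _ _] [psi_smap _ _] _.
have comp_smap := smap_comp phi_smap psi_smap.
rewrite leq_min; apply/andP; split; apply: TCn_min => //.
- exact: SD_le_comp psi_smap (SD_le_TCn n phi_smap).
- apply: (SD_le_precomp _ (smap_pow phi_smap) _ (SD_le_TCn n psi_smap)).
    exact/pow_simp_face_closed/complex_face_closed/simp_complex.
  by move=> i x; rewrite ffunE.
Qed.
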